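(* Let $\kappa:[-1,1]\to\mathbb{R}$ be given by $\kappa(t)=\sum_{q\ge 0}\frac{J_q^2}{q!}t^q$, where $J_q\in\mathbb{R}$, $J_q\neq 0$ for infinitely many $q$, $\sum_{q\ge1}\frac{|J_q|}{(q-1)!}<\infty$ (so that $\kappa\in C^1([-1,1])$), and $\kappa(1)=1$. For $L\ge1$ let $\kappa_L=\kappa\circ\cdots\circ\kappa$ ($L$ times), and let $\mathcal{I}(\kappa)=\{t\in[-1,1]:\kappa(t)=1\}$. Assume $\kappa'(1)=1$ and that there exist $c\in\mathbb{R}\setminus\{0\}$ and $\rho>1$ such that \[ 1-\kappa(t)=\kappa'(1)(1-t)-c(1-t)^{\rho}+o\bigl((1-t)^{\rho}\bigr)\quad\text{as } t\to1^-. \] Then $c>0$ and, for every $t\in[-1,1]$, \[ \mathfrak{S}(t):=\lim_{L\to\infty}L^{1/(\rho-1)}\bigl(1-\kappa_L(t)\bigr)=\begin{cases}0,& t\in\mathcal{I}(\kappa),\\ h_{c,\rho},& t\notin\mathcal{I}(\kappa),\end{cases} \] where $h_{c,\rho}=(c(\rho-1))^{-1/(\rho-1)}$. *)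

From Stdlib Require Import Reals.
From Coquelicot Require Import Coquelicot.
Open Scope R_scope.

Definition kappa (J : nat -> R) (t : R) : R :=
  Series (fun q => J q ^ 2 / INR (Factorial.fact q) * t ^ q).

Definition kappa_iter (J : nat -> R) (L : nat) (t : R) : R :=
  Nat.iter L (kappa J) t.

Definition h_const (c rho : R) : R := Rpower (c * (rho - 1)) (- (1 / (rho - 1))).

From Stdlib Require Import Reals Lra Lia.
From Coquelicot Require Import Coquelicot.
Open Scope R_scope.

(* Put a_q = J_q^2 / q!.  Then kappa is the generating function of the weights
   a_q >= 0 with sum a_q = kappa(1) = 1, so 1 - kappa(t) = sum a_q (1 - t^q), and
   the left derivative at 1 bounds the mean: sum q a_q <= 1.  As some a_q with
   q >= 2 is positive, kappa(u) - u >= a_q (1 - u)^2 on [-1, 1]: hence c >= 0, and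
   the iterates increase to 1 unless kappa(t) = 1.  For s_L = 1 - kappa_L(t) the
   expansion reads s_(L+1) = s_L - (c + o(1)) s_L^rho, so s_L^(1 - rho) grows by
   c (rho - 1) + o(1) per step, and Stolz-Cesaro gives
   s_L ~ (c (rho - 1) L)^(-1/(rho - 1)). *)

Lemma pow_le_1 u q : -1 <= u <= 1 -> u ^ q <= 1.
Proof.
  intros Hu. apply Rle_trans with (Rabs u ^ q); [apply pow_Rabs|].
  rewrite <- (pow1 q). apply pow_incr. split; [apply Rabs_pos | apply Rabs_le; lra].
Qed.

Lemma bernoulli_ineq u q : -1 <= u <= 1 -> 1 - INR q * (1 - u) <= u ^ q.
Proof.
  intros Hu. induction q as [|q IH]; [simpl; lra|].
  rewrite S_INR. simpl. pose proof (pow_le_1 u q Hu).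
  assert (0 <= (1 - u) * (1 - u ^ q)) by (apply Rmult_le_pos; lra). nra.
Qed.

Lemma bernoulli_ineq_sqr u q : -1 <= u <= 1 -> (2 <= q)%nat ->
  1 - INR q * (1 - u) + (1 - u) ^ 2 <= u ^ q.
Proof.
  intros Hu Hq. induction Hq as [|q Hq IH]; [simpl; lra|].
  rewrite S_INR. simpl. pose proof (pow_le_1 u q Hu).
  assert (0 <= (1 - u) * (1 - u ^ q)) by (apply Rmult_le_pos; lra). nra.
Qed.

Lemma pow_le_quadratic t q : 0 <= t <= 1 ->
  t ^ q <= 1 - INR q * (1 - t) + INR q ^ 2 * (1 - t) ^ 2.
Proof.
  intros Ht. induction q as [|q IH]; [simpl; lra|].
  pose proof (bernoulli_ineq t q ltac:(lra)). pose proof (pos_INR q).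
  rewrite S_INR. simpl. simpl in IH.
  assert (0 <= (1 - t) * (t ^ q - (1 - INR q * (1 - t)))) by (apply Rmult_le_pos; lra).
  assert (0 <= (INR q + 1) * ((1 - t) * (1 - t))) by (apply Rmult_le_pos; nra).
  nra.
Qed.

Lemma sum_f_R0_ge_term a k N : (forall n, 0 <= a n) -> (k <= N)%nat ->
  a k <= sum_f_R0 a N.
Proof.
  intros Ha Hk. induction Hk as [|N _ IH].
  - destruct k as [|k]; simpl; [lra|]. pose proof (cond_pos_sum a k Ha). lra.
  - simpl. pose proof (Ha (S N)). lra.
Qed.

Lemma is_lim_seq_sum_f_R0 a l : is_series a l -> is_lim_seq (sum_f_R0 a) l.
Proof.
  intros H. apply (is_lim_seq_ext (sum_n a)); [intros n; apply sum_n_Reals | exact H].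
Qed.

Lemma sum_f_R0_le_is_series a l N : (forall n, 0 <= a n) -> is_series a l ->
  sum_f_R0 a N <= l.
Proof.
  intros Ha Hl. apply sum_incr; [|exact Ha].
  apply is_lim_seq_Reals, is_lim_seq_sum_f_R0, Hl.
Qed.

Lemma is_series_le_of_sum_f_R0 a l B N0 : is_series a l ->
  (forall N, (N0 <= N)%nat -> sum_f_R0 a N <= B) -> l <= B.
Proof.
  intros Hl HB.
  exact (is_lim_seq_le_loc _ _ l B (ex_intro _ N0 HB) (is_lim_seq_sum_f_R0 _ _ Hl)
           (is_lim_seq_const B)).
Qed.

(* A nonnegative divergent series has [Series] equal to the junk value [0]. *)
Lemma is_series_of_Series_neq_0 a : (forall n, 0 <= a n) -> Series a <> 0 ->
  is_series a (Series a).
Proof.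
  intros Ha H0.
  assert (Hincr : forall n, sum_n a n <= sum_n a (S n)).
  { intros n. rewrite sum_Sn. change (plus ?x ?y) with (x + y).
    pose proof (Ha (S n)). lra. }
  pose proof (Lim_seq_correct _ (ex_lim_seq_incr _ Hincr)) as Hlim.
  unfold Series in *.
  destruct (Lim_seq (sum_n a)); simpl in *; [exact Hlim | now contradiction H0 ..].
Qed.

Section GeneratingFunction.

Variable a : nat -> R.
Hypothesis a_ge0 : forall q, 0 <= a q.
Hypothesis a_sum1 : is_series a 1.

Definition pgf (u : R) : R := Series (fun q => a q * u ^ q).

Lemma is_series_pgf u : -1 <= u <= 1 -> is_series (fun q => a q * u ^ q) (pgf u).
Proof.
  intros Hu. apply Series_correct.
  apply (@ex_series_le R_AbsRing R_CompleteNormedModule _ a); [|now exists 1].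
  intros n. change norm with Rabs.
  rewrite Rabs_mult, Rabs_pos_eq, <- RPow_abs by apply a_ge0.
  rewrite <- (Rmult_1_r (a n)) at 2. apply Rmult_le_compat_l; [apply a_ge0|].
  apply pow_le_1. split; [pose proof (Rabs_pos u); lra | apply Rabs_le; lra].
Qed.

Lemma pgf_1 : pgf 1 = 1.
Proof.
  unfold pgf. rewrite (Series_ext _ a) by (intros q; rewrite pow1; ring).
  exact (is_series_unique _ _ a_sum1).
Qed.

Lemma is_series_one_sub_pgf u : -1 <= u <= 1 ->
  is_series (fun q => a q * (1 - u ^ q)) (1 - pgf u).
Proof.
  intros Hu.
  apply (is_series_ext (fun q => plus (a q) (opp (a q * u ^ q)))).
  - intros q. change (a q - a q * u ^ q = a q * (1 - u ^ q)). ring.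
  - exact (is_series_minus _ _ _ _ a_sum1 (is_series_pgf u Hu)).
Qed.

Lemma one_sub_pgf_term_ge0 u : -1 <= u <= 1 -> forall q, 0 <= a q * (1 - u ^ q).
Proof.
  intros Hu q. apply Rmult_le_pos; [apply a_ge0|]. pose proof (pow_le_1 u q Hu). lra.
Qed.

Lemma pgf_le_1 u : -1 <= u <= 1 -> pgf u <= 1.
Proof.
  intros Hu.
  pose proof (sum_f_R0_le_is_series _ _ 0 (one_sub_pgf_term_ge0 u Hu)
                (is_series_one_sub_pgf u Hu)).
  simpl in *. lra.
Qed.

Lemma pgf_lt_1 q0 : (0 < q0)%nat -> 0 < a q0 -> forall u, -1 < u < 1 -> pgf u < 1.
Proof.
  intros Hq0 Ha u Hu.
  assert (Hterm : 0 < a q0 * (1 - u ^ q0)).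
  { apply Rmult_lt_0_compat; [exact Ha|].
    assert (Rabs u ^ q0 < 1).
    { apply pow_lt_1_compat; [split; [apply Rabs_pos | apply Rabs_def1; lra] | exact Hq0]. }
    pose proof (pow_Rabs u q0). lra. }
  pose proof (sum_f_R0_ge_term _ q0 q0 (one_sub_pgf_term_ge0 u ltac:(lra)) (le_n _)).
  pose proof (sum_f_R0_le_is_series _ _ q0 (one_sub_pgf_term_ge0 u ltac:(lra))
                (is_series_one_sub_pgf u ltac:(lra))).
  lra.
Qed.

Lemma pgf_mean_le m :
  filterlim (fun t => (pgf t - pgf 1) / (t - 1)) (at_left 1) (locally m) ->
  forall N, sum_f_R0 (fun q => INR q * a q) N <= m.
Proof.
  intros Hm N.
  set (S := sum_f_R0 (fun q => INR q * a q) N).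
  set (C := sum_f_R0 (fun q => INR q ^ 2 * a q) N).
  assert (lower : forall t, 0 < t < 1 -> S - (1 - t) * C <= (pgf t - pgf 1) / (t - 1)).
  { intros t Ht.
    assert (Hsum : (1 - t) * S - (1 - t) ^ 2 * C <= 1 - pgf t).
    { apply Rle_trans with (sum_f_R0 (fun q => a q * (1 - t ^ q)) N).
      - replace ((1 - t) * S - (1 - t) ^ 2 * C) with
          (sum_f_R0 (fun q => a q * (INR q * (1 - t) - INR q ^ 2 * (1 - t) ^ 2)) N).
        + apply sum_Rle. intros q _. apply Rmult_le_compat_l; [apply a_ge0|].
          pose proof (pow_le_quadratic t q ltac:(lra)). lra.
        + unfold S, C. rewrite !scal_sum, <- minus_sum. apply sum_eq. intros; ring.
      - apply sum_f_R0_le_is_series; [apply one_sub_pgf_term_ge0; lra|].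
        apply is_series_one_sub_pgf; lra. }
    rewrite pgf_1.
    replace ((pgf t - 1) / (t - 1)) with ((1 - pgf t) / (1 - t)) by (field; lra).
    apply Rle_div_r; [lra|]. nra. }
  assert (Hlow : filterlim (fun t => S - (1 - t) * C) (at_left 1) (locally S)).
  { apply (filterlim_filter_le_1 (F := locally 1)); [apply filter_le_within|].
    assert (Hcont : continuity_pt (fun t => S - (1 - t) * C) 1) by reg.
    apply continuity_pt_filterlim in Hcont.
    now replace (S - (1 - 1) * C) with S in Hcont by ring. }
  refine (filterlim_le _ _ S m _ Hlow Hm).
  apply (locally_interval _ 1 0 2); simpl; [lra|lra|].
  intros t Ht0 Ht2 Ht1. apply lower. lra.
Qed.

Lemma pgf_sub_id_ge q0 : (2 <= q0)%nat ->
  (forall N, sum_f_R0 (fun q => INR q * a q) N <= 1) ->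
  forall u, -1 <= u <= 1 -> a q0 * (1 - u) ^ 2 <= pgf u - u.
Proof.
  intros Hq0 Hmean u Hu.
  set (h := fun q => a q * (u ^ q - 1 + INR q * (1 - u))).
  assert (Hh : forall q, 0 <= h q).
  { intros q. apply Rmult_le_pos; [apply a_ge0|]. pose proof (bernoulli_ineq u q Hu). lra. }
  assert (Hhq0 : a q0 * (1 - u) ^ 2 <= h q0).
  { apply Rmult_le_compat_l; [apply a_ge0|].
    pose proof (bernoulli_ineq_sqr u q0 Hu Hq0). lra. }
  enough (1 - pgf u <= (1 - u) - a q0 * (1 - u) ^ 2) by lra.
  apply (is_series_le_of_sum_f_R0 _ _ _ q0 (is_series_one_sub_pgf u Hu)).
  intros N HN.
  replace (sum_f_R0 (fun q => a q * (1 - u ^ q)) N)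
    with ((1 - u) * sum_f_R0 (fun q => INR q * a q) N - sum_f_R0 h N).
  - pose proof (Hmean N). pose proof (sum_f_R0_ge_term h q0 N Hh HN).
    assert ((1 - u) * sum_f_R0 (fun q => INR q * a q) N <= 1 - u) by nra. lra.
  - unfold h. rewrite scal_sum, <- minus_sum. apply sum_eq. intros; ring.
Qed.

End GeneratingFunction.

Lemma is_lim_seq_of_sqr_increments u l d : 0 < d -> (forall n, u n < l) ->
  (forall n, d * (l - u n) ^ 2 <= u (S n) - u n) -> is_lim_seq u l.
Proof.
  intros Hd Hlt Hinc.
  assert (Hmono : forall n, u n <= u (S n)).
  { intros n. pose proof (Hinc n).
    assert (0 <= d * (l - u n) ^ 2) by (apply Rmult_le_pos; [lra | apply pow2_ge_0]). lra. }
  destruct (ex_finite_lim_seq_incr u l Hmono (fun n => Rlt_le _ _ (Hlt n))) as [m Hm].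
  assert (Hsqr : is_lim_seq (fun n => d * (l - u n) ^ 2) (d * (l - m) ^ 2)).
  { apply (is_lim_seq_continuous (fun x => d * (l - x) ^ 2)); [reg | exact Hm]. }
  assert (Hstep : is_lim_seq (fun n => u (S n) - u n) (m - m)).
  { apply is_lim_seq_minus'; [apply (is_lim_seq_incr_1 u)|]; exact Hm. }
  pose proof (is_lim_seq_le _ _ _ _ Hinc Hsqr Hstep) as Hle. simpl in Hle.
  destruct (Req_dec m l) as [<-|Hne]; [exact Hm|exfalso].
  apply (pow_nonzero (l - m) 2); [lra|].
  apply Rle_antisym; [|apply pow2_ge_0]. apply (Rmult_le_reg_l d); lra.
Qed.

Lemma is_lim_seq_at_left u (l : R) : is_lim_seq u l -> (forall n, u n < l) ->
  filterlim u eventually (at_left l).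
Proof.
  intros Hu Hlt P HP. specialize (Hu _ HP). unfold filtermap in *. revert Hu.
  apply filter_imp. intros n H. exact (H (Hlt n)).
Qed.

Lemma sum_f_R0_telescope b n : sum_f_R0 (fun k => b (S k) - b k) n = b (S n) - b O.
Proof. induction n as [|n IH]; simpl; [|rewrite IH]; ring. Qed.

(* Stolz-Cesaro (the term at [n = 0] is a division by zero and is irrelevant). *)
Lemma is_lim_seq_div_INR_of_diff b (l : R) : is_lim_seq (fun n => b (S n) - b n) l ->
  is_lim_seq (fun n => b n / INR n) l.
Proof.
  intros Hl.
  pose proof (Cesaro_1 _ _ (proj1 (is_lim_seq_Reals _ _) Hl)) as Hmean.
  apply is_lim_seq_Reals in Hmean.
  assert (H0 : is_lim_seq (fun n => b O * / INR n) 0).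
  { rewrite <- (Rmult_0_r (b O)).
    exact (is_lim_seq_mult' _ _ _ _ (is_lim_seq_const _)
             (is_lim_seq_inv _ _ is_lim_seq_INR ltac:(discriminate))). }
  rewrite <- (Rplus_0_r l).
  apply (is_lim_seq_ext_loc
           (fun n => sum_f_R0 (fun k => b (S k) - b k) (pred n) / INR n + b O * / INR n)).
  - exists 1%nat. intros [|n] Hn; [lia|]. simpl pred. rewrite sum_f_R0_telescope.
    assert (0 < INR (S n)) by (apply lt_0_INR; lia). field. lra.
  - exact (is_lim_seq_plus' _ _ _ _ Hmean H0).
Qed.

Lemma is_lim_seq_Rpower_0 s r : 0 < r -> (forall n, 0 < s n) -> is_lim_seq s 0 ->
  is_lim_seq (fun n => Rpower (s n) r) 0.
Proof.
  intros Hr Hs Hl. apply is_lim_seq_Reals. apply is_lim_seq_Reals in Hl.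
  intros eps Heps.
  destruct (Hl (Rpower eps (1 / r)) ltac:(apply exp_pos)) as [N HN].
  exists N. intros n Hn. specialize (HN n Hn). unfold Rdist in *.
  rewrite Rminus_0_r in *. rewrite Rabs_pos_eq in HN by (left; apply Hs).
  rewrite Rabs_pos_eq by (left; apply exp_pos).
  replace eps with (Rpower (Rpower eps (1 / r)) r).
  - apply exp_increasing. apply Rmult_lt_compat_l; [exact Hr|].
    apply ln_increasing; [apply Hs|exact HN].
  - rewrite Rpower_mult. replace (1 / r * r) with 1 by (field; lra). apply Rpower_1, Heps.
Qed.

(* Caratheodory's slope: continuous at [x0] exactly when [d] is the derivative of [f]
   at [x0]. *)
Definition slope (f : R -> R) (x0 d x : R) : R :=
  if Req_EM_T x x0 then d else (f x - f x0) / (x - x0).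

Lemma slope_spec f x0 d x : f x = f x0 + (x - x0) * slope f x0 d x.
Proof.
  unfold slope. destruct (Req_EM_T x x0) as [->|Hx]; [ring|]. field. lra.
Qed.

Lemma is_lim_seq_slope f x0 d u : derivable_pt_lim f x0 d -> is_lim_seq u x0 ->
  is_lim_seq (fun n => slope f x0 d (u n)) d.
Proof.
  intros Hf Hu. apply is_lim_seq_Reals. apply is_lim_seq_Reals in Hu.
  intros eps Heps.
  destruct (Hf eps Heps) as [delta Hdelta].
  destruct (Hu delta (cond_pos delta)) as [N HN].
  exists N. intros n Hn. specialize (HN n Hn). unfold Rdist, slope in *.
  destruct (Req_EM_T (u n) x0) as [E|E].
  - rewrite Rminus_diag, Rabs_R0. exact Heps.
  - specialize (Hdelta (u n - x0) ltac:(lra) HN).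
    replace (x0 + (u n - x0)) with (u n) in Hdelta by ring. exact Hdelta.
Qed.

Lemma Rpower_1_l y : Rpower 1 y = 1.
Proof. unfold Rpower. rewrite ln_1, Rmult_0_r. apply exp_0. Qed.

Lemma Rpower_inv_l x y : 0 < x -> Rpower (/ x) y = Rpower x (- y).
Proof. intros Hx. unfold Rpower. rewrite ln_Rinv by exact Hx. f_equal. ring. Qed.

Lemma continuity_pt_Rpower_l y x : 0 < x -> continuity_pt (fun z => Rpower z y) x.
Proof.
  intros Hx. apply derivable_continuous_pt.
  exists (y * Rpower x (y - 1)). apply derivable_pt_lim_power, Hx.
Qed.

(* With [r = rho - 1] and [b n = s n ^ (- r)], the recurrence gives
   [b (S n) - b n -> c r]; Stolz-Cesaro then yields [b n / n -> c r]. *)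
Lemma is_lim_seq_power_recurrence (s e : nat -> R) c rho :
  0 < c -> 1 < rho -> (forall n, 0 < s n) -> is_lim_seq s 0 -> is_lim_seq e 0 ->
  (forall n, s (S n) = s n - (c - e n) * Rpower (s n) rho) ->
  is_lim_seq (fun n => Rpower (INR n) (1 / (rho - 1)) * s n) (h_const c rho).
Proof.
  intros Hc Hrho Hs Hs0 He Hrec. unfold h_const.
  set (r := rho - 1). assert (Hr : 0 < r) by (unfold r; lra).
  set (y := fun n => 1 - (c - e n) * Rpower (s n) r).
  assert (Hsy : forall n, s (S n) = s n * y n).
  { intros n. rewrite Hrec. unfold y. replace rho with (1 + r) by (unfold r; ring).
    rewrite Rpower_plus, Rpower_1 by apply Hs. ring. }
  assert (Hy : forall n, 0 < y n).
  { intros n. apply (Rmult_lt_reg_l (s n)); [apply Hs|].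
    rewrite Rmult_0_r, <- Hsy. apply Hs. }
  assert (Hy1 : is_lim_seq y 1).
  { pose proof (is_lim_seq_minus' _ _ _ _ (is_lim_seq_const 1)
      (is_lim_seq_mult' _ _ _ _ (is_lim_seq_minus' _ _ _ _ (is_lim_seq_const c) He)
         (is_lim_seq_Rpower_0 s r Hr Hs Hs0))) as H.
    now rewrite Rmult_0_r, Rminus_0_r in H. }
  set (b := fun n => Rpower (s n) (- r)).
  set (g := fun x => Rpower x (- r)).
  set (g' := - r * Rpower 1 (- r - 1)).
  assert (Hg : derivable_pt_lim g 1 g') by (apply derivable_pt_lim_power; lra).
  assert (Hdiff : forall n, b (S n) - b n = (e n - c) * slope g 1 g' (y n)).
  { intros n. assert (Hbs : b n * Rpower (s n) r = 1).
    { unfold b. rewrite <- Rpower_plus, Rplus_opp_l. apply Rpower_O, Hs. }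
    unfold b at 1. rewrite Hsy, <- Rpower_mult_distr by (apply Hs || apply Hy).
    change (Rpower (y n) (- r)) with (g (y n)).
    rewrite (slope_spec g 1 g' (y n)). unfold g at 1. rewrite Rpower_1_l.
    fold (b n). replace (y n - 1) with (- (c - e n) * Rpower (s n) r) by (unfold y; ring).
    transitivity ((e n - c) * slope g 1 g' (y n) * (b n * Rpower (s n) r)); [ring|].
    rewrite Hbs. ring. }
  assert (Hb : is_lim_seq (fun n => b (S n) - b n) (c * r)).
  { apply (is_lim_seq_ext _ _ _ (fun n => eq_sym (Hdiff n))).
    pose proof (is_lim_seq_mult' _ _ _ _
      (is_lim_seq_minus' _ _ _ _ He (is_lim_seq_const c))
      (is_lim_seq_slope _ _ _ _ Hg Hy1)) as H.
    replace (c * r) with ((0 - c) * g') by (unfold g'; rewrite Rpower_1_l; ring).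
    exact H. }
  pose proof (is_lim_seq_continuous _ _ _ (continuity_pt_Rpower_l (- (1 / r)) (c * r)
                ltac:(nra)) (is_lim_seq_div_INR_of_diff b _ Hb)) as H.
  refine (is_lim_seq_ext_loc _ _ _ _ H).
  exists 1%nat. intros n Hn1.
  assert (Hn : 0 < INR n) by (apply lt_0_INR; lia).
  change (b n / INR n) with (b n * / INR n).
  rewrite <- Rpower_mult_distr by (apply exp_pos || apply Rinv_0_lt_compat, Hn).
  unfold b. rewrite Rpower_mult, Rpower_inv_l, Ropp_involutive by exact Hn.
  replace (- r * - (1 / r)) with 1 by (field; lra).
  rewrite Rpower_1 by apply Hs. ring.
Qed.

Section Iterates.

Variables (f : R -> R) (d c rho : R).
Hypothesis d_pos : 0 < d.
Hypothesis f_sub_id_ge : forall u, -1 <= u <= 1 -> d * (1 - u) ^ 2 <= f u - u.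
Hypothesis f_le_1 : forall u, -1 <= u <= 1 -> f u <= 1.
Hypothesis f_lt_1 : forall u, -1 < u < 1 -> f u < 1.

Definition expansion_remainder (t : R) : R :=
  (1 - f t - (1 * (1 - t) - c * Rpower (1 - t) rho)) / Rpower (1 - t) rho.

Hypothesis f_expansion : filterlim expansion_remainder (at_left 1) (locally 0).

Lemma map_fix_1 : f 1 = 1.
Proof. pose proof (f_sub_id_ge 1). pose proof (f_le_1 1). simpl in *. lra. Qed.

Lemma map_ge_id u : -1 <= u <= 1 -> u <= f u.
Proof.
  intros Hu. pose proof (f_sub_id_ge u Hu).
  assert (0 <= d * (1 - u) ^ 2) by (apply Rmult_le_pos; [lra | apply pow2_ge_0]). lra.
Qed.

Lemma map_gt_m1 u : -1 <= u <= 1 -> -1 < f u.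
Proof.
  intros Hu. destruct (Req_dec u (-1)) as [->|Hne]; [|pose proof (map_ge_id u Hu); lra].
  pose proof (f_sub_id_ge (-1) Hu). replace ((1 - -1) ^ 2) with 4 in * by ring. lra.
Qed.

Lemma iter_fixed t n : f t = 1 -> Nat.iter (S n) f t = 1.
Proof.
  intros Ht. induction n as [|n IH]; [exact Ht|].
  change (f (Nat.iter (S n) f t) = 1). rewrite IH. exact map_fix_1.
Qed.

Lemma iter_bounds t : -1 <= t <= 1 -> f t <> 1 -> forall n, -1 <= Nat.iter n f t < 1.
Proof.
  intros Ht Hft.
  assert (HS : forall n, -1 < Nat.iter (S n) f t < 1).
  { induction n as [|n IH]; change (Nat.iter (S ?k) f t) with (f (Nat.iter k f t)).
    - pose proof (map_gt_m1 t Ht). pose proof (f_le_1 t Ht). simpl. lra.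
    - split; [apply map_gt_m1; lra | apply f_lt_1, IH]. }
  intros [|n]; [|pose proof (HS n); lra].
  simpl. destruct (Req_dec t 1) as [->|]; [now pose proof map_fix_1|lra].
Qed.

Lemma expansion_coef_ge0 : 0 <= c.
Proof.
  refine (filterlim_le (F := at_left 1) _ (fun _ => c) 0 c _ f_expansion
            (filterlim_const c)).
  apply (locally_interval _ 1 0 2); simpl; [lra|lra|].
  intros t Ht0 Ht2 Ht1.
  pose proof (map_ge_id t ltac:(lra)).
  assert (HP : 0 < Rpower (1 - t) rho) by apply exp_pos.
  unfold expansion_remainder.
  replace ((1 - f t - (1 * (1 - t) - c * Rpower (1 - t) rho)) / Rpower (1 - t) rho)
    with ((t - f t) / Rpower (1 - t) rho + c) by (field; lra).
  assert ((t - f t) / Rpower (1 - t) rho <= 0).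
  { apply Rmult_le_0_r; [lra | left; apply Rinv_0_lt_compat, HP]. }
  lra.
Qed.

Lemma iter_asymptotics t : 0 < c -> 1 < rho -> -1 <= t <= 1 -> f t <> 1 ->
  is_lim_seq (fun L => Rpower (INR L) (1 / (rho - 1)) * (1 - Nat.iter L f t))
    (h_const c rho).
Proof.
  intros Hc Hrho Ht Hft.
  set (u := fun n => Nat.iter n f t).
  pose proof (iter_bounds t Ht Hft) as Hu.
  assert (Hu1 : is_lim_seq u 1).
  { apply (is_lim_seq_of_sqr_increments u 1 d d_pos); [apply Hu|].
    intros n. apply f_sub_id_ge. pose proof (Hu n). unfold u. lra. }
  assert (He : is_lim_seq (fun n => expansion_remainder (u n)) 0).
  { apply (filterlim_comp _ _ _ u expansion_remainder _ (at_left 1));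
      [apply is_lim_seq_at_left; [exact Hu1 | apply Hu] | exact f_expansion]. }
  refine (is_lim_seq_power_recurrence _ _ c rho Hc Hrho _ _ He _).
  - intros n. pose proof (Hu n). unfold u. lra.
  - pose proof (is_lim_seq_minus' _ _ _ _ (is_lim_seq_const 1) Hu1) as H.
    now rewrite Rminus_diag in H.
  - intros n. unfold u. change (Nat.iter (S n) f t) with (f (Nat.iter n f t)).
    assert (HP : 0 < Rpower (1 - Nat.iter n f t) rho) by apply exp_pos.
    unfold expansion_remainder. field. lra.
Qed.

End Iterates.

Definition kappa_coef (J : nat -> R) (q : nat) : R := J q ^ 2 / INR (Factorial.fact q).

Lemma kappa_coef_ge0 J q : 0 <= kappa_coef J q.
Proof.
  apply Rmult_le_pos; [apply pow2_ge_0 | left; apply Rinv_0_lt_compat, INR_fact_lt_0].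
Qed.

Lemma kappa_coef_gt0 J q : J q <> 0 -> 0 < kappa_coef J q.
Proof. intros HJ. apply Rdiv_lt_0_compat; [apply pow2_gt_0, HJ | apply INR_fact_lt_0]. Qed.

Lemma kappa_pgf J : kappa J = pgf (kappa_coef J).
Proof. reflexivity. Qed.

Lemma is_series_kappa_coef J : kappa J 1 = 1 -> is_series (kappa_coef J) 1.
Proof.
  intros Hk1.
  assert (HS : Series (kappa_coef J) = 1).
  { rewrite <- Hk1, kappa_pgf. unfold pgf. apply Series_ext. intros q. rewrite pow1. ring. }
  rewrite <- HS. apply is_series_of_Series_neq_0; [apply kappa_coef_ge0 | lra].
Qed.

Theorem lemma3p7 (J : nat -> R) (c rho : R)
  (HJinf : forall N : nat, exists q : nat, (N <= q)%nat /\ J q <> 0)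
  (HJsum : ex_series (fun n => Rabs (J (S n)) / INR (Factorial.fact n)))
  (Hk1 : kappa J 1 = 1)
  (Hderiv : filterlim (fun t => (kappa J t - kappa J 1) / (t - 1))
              (at_left 1) (locally 1))
  (Hc : c <> 0) (Hrho : 1 < rho)
  (Hexp : filterlim
            (fun t => (1 - kappa J t - (1 * (1 - t) - c * Rpower (1 - t) rho))
                      / Rpower (1 - t) rho)
            (at_left 1) (locally 0)) :
  0 < c /\
  forall t : R, -1 <= t <= 1 ->
    is_lim_seq (fun L : nat => Rpower (INR L) (1 / (rho - 1)) * (1 - kappa_iter J L t))
      (if Req_EM_T (kappa J t) 1 then 0 else h_const c rho).
Proof.
  pose proof (kappa_coef_ge0 J) as Ha.
  pose proof (is_series_kappa_coef J Hk1) as Ha1.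
  destruct (HJinf 2%nat) as [q0 [Hq0 HJq0]].
  pose proof (kappa_coef_gt0 J q0 HJq0) as Haq0.
  pose proof (pgf_mean_le _ Ha Ha1 1 Hderiv) as Hmean.
  pose proof (pgf_sub_id_ge _ Ha Ha1 q0 Hq0 Hmean) as Hgap.
  pose proof (pgf_le_1 _ Ha Ha1) as Hle1.
  pose proof (pgf_lt_1 _ Ha Ha1 q0 ltac:(lia) Haq0) as Hlt1.
  rewrite kappa_pgf in Hexp |- *.
  assert (Hc_pos : 0 < c).
  { pose proof (expansion_coef_ge0 _ _ c rho Haq0 Hgap Hexp). lra. }
  split; [exact Hc_pos|]. intros t Ht. unfold kappa_iter. rewrite kappa_pgf.
  destruct (Req_EM_T (pgf (kappa_coef J) t) 1) as [Hfix|Hnfix].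
  - apply is_lim_seq_incr_1, (is_lim_seq_ext (fun _ => 0)); [|apply is_lim_seq_const].
    intros n. rewrite (iter_fixed _ _ Hgap Hle1 t n Hfix). ring.
  - exact (iter_asymptotics _ _ c rho Haq0 Hgap Hle1 Hlt1 Hexp t Hc_pos Hrho Ht Hnfix).
Qed.
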